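(* Let $\Lambda\colon L\times W\to[0,\infty]$ be a Dowker dissimilarity with a triangle relation $T$, let $\beta\colon[0,\infty]\to[0,\infty]$ be order preserving with $\lim_{t\to\infty}\beta(t)=\infty$, and let $\lambda$ be a $T$-insertion function for $\Lambda$ of resolution at most $\beta$. If $\alpha\colon[0,\infty]\to[0,\infty]$ is order preserving with $\alpha(t)\ge t+\beta(t)+\sup\Lambda(T)$ for all $t\in[0,\infty]$, then $\Delta_L$ is a morphism $\Lambda\to\alpha^*\Lambda^{(\lambda,\alpha,\beta)}$ of Dowker dissimilarities; that is, for every $t\in[0,\infty]$, every $\sigma\in N\Lambda_t$ lies in $N\Lambda^{(\lambda,\alpha,\beta)}_{\alpha(t)}$.
   Context: A Dowker dissimilarity is a function $\Lambda\colon L\times W\to[0,\infty]$; $N\Lambda_t=\{\text{finite }\sigma\subseteq L\mid\exists w\in W:\Lambda(l,w)<t\ \forall l\in\sigma\}$. A triangle relation for $\Lambda$ is a relation $T\subseteq L\times W$ such that for every $w\in W$ there is $l\in L$ with $(l,w)\in T$, and for all $(l,w)\in T$ and $(l',w')\in L\times W$: $\Lambda(l',w')\le\Lambda(l',w)+\Lambda(l,w')+\Lambda(l,w)$. $\sup\Lambda(T)=\sup\{\Lambda(l,w)\mid(l,w)\in T\}$. A $T$-insertion function for $\Lambda$ of resolution at most $\beta$ is a function $\lambda\colon W\to[0,\infty]$ such that for every $t\in[0,\infty]$ and every $(l,w)\in T$ there exists $w_0\in W$ with $\Lambda(l,w_0)\le\beta(t)<\lambda(w_0)$. The generalized inverse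 is $\beta^{\leftarrow}(s)=\inf\{t\in[0,\infty]\mid\beta(t)\ge s\}$. The $(\lambda,\alpha,\beta)$-truncation of $\Lambda$ is $\Lambda^{(\lambda,\alpha,\beta)}(l,w)=\Lambda(l,w)$ if $\Lambda(l,w)\le\alpha(\beta^{\leftarrow}(\lambda(w)))$ and $=\infty$ otherwise. *)

From HB Require Import structures.
From mathcomp Require Import all_boot all_order all_algebra.
From mathcomp Require Import all_classical all_reals.
From mathcomp Require Import ereal topology normedtype sequences.
Set Implicit Arguments. Unset Strict Implicit. Unset Printing Implicit Defensive.
Import Order.TTheory GRing.Theory Num.Theory.
Local Open Scope classical_set_scope.
Local Open Scope ereal_scope.

(* [0,oo] is modelled as the nonnegative part of \bar R. *)

Definition dowker_dissim {R : realType} {L W : Type} (Lam : L -> W -> \bar R) :=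
  forall l w, 0 <= Lam l w.

Definition nerve {R : realType} {L W : Type} (Lam : L -> W -> \bar R) (t : \bar R)
  : set (set L) :=
  [set sigma | finite_set sigma /\ exists w, forall l, sigma l -> Lam l w < t].

Definition triangle_relation {R : realType} {L W : Type}
  (Lam : L -> W -> \bar R) (T : L -> W -> Prop) :=
  (forall w, exists l, T l w) /\
  (forall l w l' w', T l w -> Lam l' w' <= Lam l' w + Lam l w' + Lam l w).

(* supremum taken in [0,oo] (so the empty sup is 0) *)
Definition supT {R : realType} {L W : Type} (Lam : L -> W -> \bar R) (T : L -> W -> Prop)
  : \bar R :=
  ereal_sup ([set 0] `|` [set Lam p.1 p.2 | p in [set p : L * W | T p.1 p.2]]).

Definition order_preserving {R : realType} (f : \bar R -> \bar R) :=
  (forall x, 0 <= x -> 0 <= f x) /\ (forall x y, 0 <= x -> x <= y -> f x <= f y).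

Definition insertion_function {R : realType} {L W : Type} (Lam : L -> W -> \bar R)
  (T : L -> W -> Prop) (beta : \bar R -> \bar R) (lam : W -> \bar R) :=
  (forall w, 0 <= lam w) /\
  (forall (t : R), (0 <= t)%R -> forall l w, T l w ->
     exists w0, Lam l w0 <= beta t%:E /\ beta t%:E < lam w0).

Definition gen_inv {R : realType} (beta : \bar R -> \bar R) (s : \bar R) : \bar R :=
  ereal_inf [set t | 0 <= t /\ s <= beta t].

Definition truncation {R : realType} {L W : Type} (Lam : L -> W -> \bar R)
  (lam : W -> \bar R) (alpha beta : \bar R -> \bar R) : L -> W -> \bar R :=
  fun l w => if (Lam l w <= alpha (gen_inv beta (lam w)))%E then Lam l w else +oo.

(* Take a witness [w] of [sigma] at a real level [r <= t] (one exists because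
   [sigma] is finite) and an [l0] with [T l0 w].  The insertion function at
   level [r] provides [w0] with [Lam l0 w0 <= beta r < lam w0]; the triangle
   relation then gives [Lam l w0 < r + beta r + supT <= alpha r] for [l] in
   [sigma].  Since [beta r < lam w0] forces [r <= beta^<-(lam w0)], these values
   survive the truncation at [w0].  If [supT] is infinite, so is [alpha], and
   the truncation removes nothing. *)

From HB Require Import structures.
From mathcomp Require Import all_boot all_order all_algebra.
From mathcomp Require Import all_classical all_reals.
From mathcomp Require Import ereal topology normedtype sequences.
Import Order.TTheory GRing.Theory Num.Theory.
Local Open Scope classical_set_scope.
Local Open Scope ereal_scope.

Lemma finite_set_ereal_ltr {R : realType} {A : set (\bar R)} :
  finite_set A -> (forall x, A x -> x < +oo) ->
  exists2 r : R, (0 <= r)%R & forall x, A x -> x < r%:E.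
Proof.
move=> /finite_seqP[s ->]; elim: s => [|a s IHs] ltsy; first by exists 0%R.
have [r r_ge0 ltsr] : exists2 r : R, (0 <= r)%R & forall x, x \in s -> x < r%:E.
  by apply: IHs => x xs; apply: ltsy; rewrite /= inE xs orbT.
exists (Num.max r (fine a + 1))%R; first by rewrite le_max r_ge0.
move=> x /=; rewrite inE => /predU1P[->|xs].
  have : a < +oo by apply: ltsy; rewrite /= inE eqxx.
  case: a {ltsy} => [a _| //|_] /=; last exact: ltNyr.
  by rewrite lte_fin lt_max ltrDl ltr01 orbT.
by apply: lt_le_trans (ltsr x xs) _; rewrite lee_fin le_max lexx.
Qed.

Section Nerve.
Context {R : realType} {L W : Type} {Lam : L -> W -> \bar R}.

Lemma nerve_le {s t : \bar R} : s <= t -> nerve Lam s `<=` nerve Lam t.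
Proof.
move=> st sigma [fin_sigma [w ltLam]]; split => //.
by exists w => l /ltLam /lt_le_trans; apply.
Qed.

Lemma nerve_real_level {t : \bar R} {sigma : set L} :
  0 <= t -> nerve Lam t sigma ->
  exists2 r : R, (0 <= r)%R /\ r%:E <= t & nerve Lam r%:E sigma.
Proof.
case: t => [t | |] t_ge0 [fin_sigma [w ltLam]] //.
  by exists t => //; split=> //; exists w.
have ltLamy : forall x, ((Lam^~ w) @` sigma) x -> x < +oo.
  by move=> _ [l /ltLam ? <-].
have [r r_ge0 ltr] := finite_set_ereal_ltr (finite_image _ fin_sigma) ltLamy.
exists r; first by rewrite leey.
by split=> //; exists w => l sl; apply: ltr; exists l.
Qed.

End Nerve.

Lemma gen_inv_ge0 (R : realType) (beta : \bar R -> \bar R) (s : \bar R) :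
  0 <= gen_inv beta s.
Proof. by apply: le_ereal_inf_tmp => x []. Qed.

Lemma gen_inv_ge (R : realType) (beta : \bar R -> \bar R) (r s : \bar R) :
  order_preserving beta -> 0 <= r -> beta r < s -> r <= gen_inv beta s.
Proof.
move=> [_ beta_mono] r_ge0 lt_beta_s; apply: le_ereal_inf_tmp => x [x_ge0 le_s_beta].
rewrite leNgt; apply/negP => /ltW /(beta_mono _ _ x_ge0) le_beta.
by have := le_lt_trans (le_trans le_s_beta le_beta) lt_beta_s; rewrite ltxx.
Qed.

Section Truncation.
Context {R : realType} {L W : Type} {Lam : L -> W -> \bar R}.
Context {T : L -> W -> Prop} {lam : W -> \bar R} {alpha beta : \bar R -> \bar R}.

Lemma supT_ub {l w} : T l w -> Lam l w <= supT Lam T.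
Proof. by move=> Tlw; apply: ereal_sup_ubound; right; exists (l, w). Qed.

Lemma truncationE l w :
  Lam l w <= alpha (gen_inv beta (lam w)) -> truncation Lam lam alpha beta l w = Lam l w.
Proof. by rewrite /truncation => ->. Qed.

Lemma truncation_id :
  (forall w, alpha (gen_inv beta (lam w)) = +oo) -> truncation Lam lam alpha beta = Lam.
Proof.
by move=> alpha_y; apply/funext => l; apply/funext => w; rewrite truncationE ?alpha_y ?leey.
Qed.

Hypothesis Lam_ge0 : dowker_dissim Lam.
Hypothesis triangleT : triangle_relation Lam T.
Hypothesis beta_op : order_preserving beta.
Hypothesis lam_ins : insertion_function Lam T beta lam.
Hypothesis alpha_op : order_preserving alpha.
Hypothesis alpha_ge : forall t, 0 <= t -> t + beta t + supT Lam T <= alpha t.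

Lemma triangle_relation_lt {l l0 w w0} {a b c : \bar R} : T l0 w ->
  Lam l w < a -> Lam l0 w0 <= b -> Lam l0 w <= c -> b < +oo -> c < +oo ->
  Lam l w0 < a + b + c.
Proof.
move=> Tl0w ltLa leLb leLc lt_by lt_cy.
apply: le_lt_trans (triangleT.2 _ _ _ _ Tl0w) _.
have finLb : Lam l0 w0 \is a fin_num by rewrite ge0_fin_numE // (le_lt_trans leLb).
have finLc : Lam l0 w \is a fin_num by rewrite ge0_fin_numE // (le_lt_trans leLc).
exact: lte_leD finLc (lte_leD finLb ltLa leLb) leLc.
Qed.

Lemma alpha_supT_eqy : supT Lam T = +oo -> forall t, 0 <= t -> alpha t = +oo.
Proof.
move=> supTy t t_ge0; apply/eqP; rewrite -leye_eq (le_trans _ (alpha_ge _ t_ge0)) //.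
rewrite supTy addey //.
by rewrite gt_eqF // (lt_le_trans ltNy0) // adde_ge0 // beta_op.1.
Qed.

Lemma nerve_truncation_real {r : R} {sigma : set L} :
  supT Lam T < +oo -> (0 <= r)%R ->
  nerve Lam r%:E sigma -> nerve (truncation Lam lam alpha beta) (alpha r%:E) sigma.
Proof.
move=> lt_supTy r_ge0 [fin_sigma [w ltLam]]; split => //.
have [l0 Tl0w] := triangleT.1 w.
have [w0 [le_beta lt_lam]] := lam_ins.2 r r_ge0 l0 w Tl0w.
have lt_betay : beta r%:E < +oo by apply: lt_le_trans lt_lam (leey _).
have r_ge0E : 0 <= r%:E by rewrite lee_fin.
have le_r_inv : r%:E <= gen_inv beta (lam w0) by apply: gen_inv_ge.
exists w0 => l sl.
have lt_alpha : Lam l w0 < alpha r%:E.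
  apply: lt_le_trans (alpha_ge _ r_ge0E).
  exact: triangle_relation_lt Tl0w (ltLam l sl) le_beta (supT_ub Tl0w) lt_betay lt_supTy.
rewrite truncationE // (le_trans (ltW lt_alpha)) //.
exact: alpha_op.2 le_r_inv.
Qed.

End Truncation.

Theorem lemma9p4 (R : realType) (L W : Type) (Lam : L -> W -> \bar R)
  (T : L -> W -> Prop) (beta alpha : \bar R -> \bar R) (lam : W -> \bar R) :
  dowker_dissim Lam ->
  triangle_relation Lam T ->
  order_preserving beta ->
  (fun t : R => beta t%:E) @ +oo%R --> +oo ->
  insertion_function Lam T beta lam ->
  order_preserving alpha ->
  (forall t, 0 <= t -> t + beta t + supT Lam T <= alpha t) ->
  forall t, 0 <= t ->
    forall sigma, nerve Lam t sigma ->
      nerve (truncation Lam lam alpha beta) (alpha t) sigma.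
Proof.
move=> Lam_ge0 triangleT beta_op _ lam_ins alpha_op alpha_ge t t_ge0 sigma sigma_t.
have [supTy | lt_supTy] := eqVneq (supT Lam T) +oo.
  have alpha_y := alpha_supT_eqy beta_op alpha_ge supTy.
  rewrite truncation_id => [|w]; last exact/alpha_y/gen_inv_ge0.
  by apply: nerve_le _ _ sigma_t; rewrite alpha_y ?leey.
rewrite -ltey in lt_supTy.
have [r [r_ge0 le_rt] sigma_r] := nerve_real_level t_ge0 sigma_t.
have le_alpha : alpha r%:E <= alpha t by apply: alpha_op.2 le_rt; rewrite lee_fin.
apply: nerve_le le_alpha _ (nerve_truncation_real Lam_ge0 triangleT beta_op lam_ins
  alpha_op alpha_ge lt_supTy r_ge0 sigma_r).
Qed.
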